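(* For every $b,c\in\mathbb R$, each of the following systems has an isochronous center at the origin $O$ with zero Urabe function: (i) $\dot x=-y+\frac b3xy+x^2-\frac b3x^3$, $\dot y=x+by^2-2xy-\frac b3x^2-\frac{4b}{3}x^2y+\left(\frac{b^2}{27}+2\right)x^3+\frac b3x^4$; (ii) $\dot x=-y+\frac b4xy+x^2-\frac b4x^3$, $\dot y=x+by^2-2xy-\frac{3b}{8}x^2-\frac{3b}{2}x^2y+\left(\frac{b^2}{16}+2\right)x^3+\left(-\frac{b^3}{256}+\frac b2\right)x^4$; (iii) $\dot x=-y-\frac{45}{8}x^2y+x^2+\frac{45}{8}x^4$, $\dot y=x-2xy-\frac{225}{8}xy^2+\frac{19}{2}x^3+45x^3y$; (iv) $\dot x=-y+\frac{c^2}{2}x^2y+x^2-\frac{c^2}{2}x^4$, $\dot y=x+cy^2-2xy-\frac c2x^2+c^2xy^2-2cx^2y+2x^3-c^2x^3y+cx^4$.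
   Context: For a real planar polynomial system $\dot x=-y+A(x,y)$, $\dot y=x+B(x,y)$, with $A,B$ polynomials having no terms of degree $<2$, the origin $O$ is an isochronous center if there is a punctured neighborhood of $O$ in which every orbit is a closed orbit surrounding $O$ and all these orbits have the same period. Zero Urabe function: write the system as $\dot x=p_0(x)+p_1(x)y$, $\dot y=q_0(x)+q_1(x)y+q_2(x)y^2$ ($p_0(0)=q_0(0)=0$, $p_1(0)\ne0$), where it holds that $-\frac{p_1'p_0}{p_1}+q_1+p_0'-\frac{2q_2p_0}{p_1}\equiv0$. Put $f=-\frac{q_2+p_1'}{p_1}$, $g=-\frac{q_2p_0^2}{p_1}+q_1p_0-p_1q_0$ (the change $z=p_0+p_1y$ gives $\dot x=z$, $\dot z=-g(x)-f(x)z^2$), $F(x)=\int_0^xf$, and $\xi$ near $0$ by $\frac12\xi(x)^2=\int_0^xg(s)e^{2F(s)}ds$, $x\xi(x)>0$ for $x\ne0$. The Urabe function of an isochronous center is the odd analytic $h$ with $\frac{\xi(x)}{1+h(\xi(x))}=g(x)e^{F(x)}$; ''zero Urabe function'' means $h\equiv0$, i.e. $\xi(x)=g(x)e^{F(x)}$ near $0$. *)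

From Stdlib Require Import Reals Lra ClassicalEpsilon.
Open Scope R_scope.

Definition solution (P Q : R -> R -> R) (x y : R -> R) : Prop :=
  forall t, derivable_pt_lim x t (P (x t) (y t)) /\
            derivable_pt_lim y t (Q (x t) (y t)).

Definition closed_orbit_period (x y : R -> R) (T : R) : Prop :=
  0 < T /\
  (forall t, x (t + T) = x t /\ y (t + T) = y t) /\
  (forall s, 0 < s < T -> (x s, y s) <> (x 0, y 0)).

(* the closed orbit (of period T) surrounds the origin: it avoids O and
   has nonzero winding number around O (continuous polar angle lift). *)
Definition surrounds_origin (x y : R -> R) (T : R) : Prop :=
  (forall t, x t ^ 2 + y t ^ 2 <> 0) /\
  exists theta : R -> R, continuity theta /\
    (forall t, x t = sqrt (x t ^ 2 + y t ^ 2) * cos (theta t) /\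
               y t = sqrt (x t ^ 2 + y t ^ 2) * sin (theta t)) /\
    theta T <> theta 0.

Definition isochronous_center (P Q : R -> R -> R) : Prop :=
  exists eps, 0 < eps /\ exists T, 0 < T /\
    forall a b, 0 < a ^ 2 + b ^ 2 < eps ^ 2 ->
      exists x y : R -> R, solution P Q x y /\ x 0 = a /\ y 0 = b /\
        closed_orbit_period x y T /\ surrounds_origin x y T.

(* Total version of the (oriented) Riemann integral \int_a^b f. *)
Definition Rint (f : R -> R) (a b : R) : R :=
  epsilon (inhabits 0)
    (fun v => exists pr : Riemann_integrable f a b, RiemannInt pr = v).

(* Zero Urabe function for the system written as
   x' = p0(x) + p1(x) y,  y' = q0(x) + q1(x) y + q2(x) y^2. *)
Definition zero_Urabe (p0 p1 q0 q1 q2 : R -> R) : Prop :=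
  exists dp0 dp1 : R -> R,
    (forall x, derivable_pt_lim p0 x (dp0 x)) /\
    (forall x, derivable_pt_lim p1 x (dp1 x)) /\
    (forall x, p1 x <> 0 ->
       - dp1 x * p0 x / p1 x + q1 x + dp0 x - 2 * q2 x * p0 x / p1 x = 0) /\
    let f := fun x => - (q2 x + dp1 x) / p1 x in
    let g := fun x => - q2 x * p0 x ^ 2 / p1 x + q1 x * p0 x - p1 x * q0 x in
    let F := fun x => Rint f 0 x in
    exists delta, 0 < delta /\
      forall x, Rabs x < delta ->
        inhabited (Riemann_integrable f 0 x) /\
        inhabited (Riemann_integrable (fun s => g s * exp (2 * F s)) 0 x) /\
        (* xi(x) := g(x) e^{F(x)} satisfies the defining relations of xi *)
        / 2 * (g x * exp (F x)) ^ 2 = Rint (fun s => g s * exp (2 * F s)) 0 x /\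
        (x <> 0 -> x * (g x * exp (F x)) > 0).

Definition iso_center_zero_Urabe (P Q : R -> R -> R) : Prop :=
  isochronous_center P Q /\
  exists p0 p1 q0 q1 q2 : R -> R,
    (forall x y, P x y = p0 x + p1 x * y) /\
    (forall x y, Q x y = q0 x + q1 x * y + q2 x * y ^ 2) /\
    p0 0 = 0 /\ q0 0 = 0 /\ p1 0 <> 0 /\
    zero_Urabe p0 p1 q0 q1 q2.

Definition P1 (b : R) (x y : R) : R := - y + b / 3 * x * y + x ^ 2 - b / 3 * x ^ 3.
Definition Q1 (b : R) (x y : R) : R :=
  x + b * y ^ 2 - 2 * x * y - b / 3 * x ^ 2 - 4 * b / 3 * x ^ 2 * y
  + (b ^ 2 / 27 + 2) * x ^ 3 + b / 3 * x ^ 4.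

Definition P2 (b : R) (x y : R) : R := - y + b / 4 * x * y + x ^ 2 - b / 4 * x ^ 3.
Definition Q2 (b : R) (x y : R) : R :=
  x + b * y ^ 2 - 2 * x * y - 3 * b / 8 * x ^ 2 - 3 * b / 2 * x ^ 2 * y
  + (b ^ 2 / 16 + 2) * x ^ 3 + (- b ^ 3 / 256 + b / 2) * x ^ 4.

Definition P3 (x y : R) : R := - y - 45 / 8 * x ^ 2 * y + x ^ 2 + 45 / 8 * x ^ 4.
Definition Q3 (x y : R) : R :=
  x - 2 * x * y - 225 / 8 * x * y ^ 2 + 19 / 2 * x ^ 3 + 45 * x ^ 3 * y.

Definition P4 (c : R) (x y : R) : R :=
  - y + c ^ 2 / 2 * x ^ 2 * y + x ^ 2 - c ^ 2 / 2 * x ^ 4.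
Definition Q4 (c : R) (x y : R) : R :=
  x + c * y ^ 2 - 2 * x * y - c / 2 * x ^ 2 + c ^ 2 * x * y ^ 2
  - 2 * c * x ^ 2 * y + 2 * x ^ 3 - c ^ 2 * x ^ 3 * y + c * x ^ 4.

(* Since [g e^F] has derivative [e^F], the map [(x, y) |-> (u, v)] with
   [u = g(x) e^(F x)] and [v = e^(F x) (p0(x) + p1(x) y)] satisfies [u' = v]
   along solutions, and the compatibility condition on [p0, p1, q1, q2] gives
   [v' = - u].  The system is thus conjugate near O to the harmonic oscillator:
   every orbit is the preimage of a circle run through in time [2 PI], and it
   winds once around O because [(x, y)] and [(u, - v)] make an acute angle.
   For zero Urabe function, [xi = g e^F] satisfies [(xi^2 / 2)' = g e^(2F)].
   For each of the four systems [F] is an explicit logarithm, the identity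
   [(g e^F)' = e^F] is a rational identity, and all estimates hold on a small
   interval [[-d, d]]. *)

From Stdlib Require Import Reals Lra ClassicalEpsilon Ranalysis5 Ratan FunctionalExtensionality.
Open Scope R_scope.

Lemma Rabs_le_between a b : Rabs a <= b -> - b <= a <= b.
Proof. unfold Rabs; destruct (Rcase_abs a); intros; lra. Qed.

Lemma Rabs_le_between_0 s t : Rmin 0 s <= t <= Rmax 0 s -> Rabs t <= Rabs s.
Proof.
  unfold Rmin, Rmax. destruct (Rle_dec 0 s); intros h;
  unfold Rabs; destruct (Rcase_abs t); destruct (Rcase_abs s); lra.
Qed.

Lemma RiemannInt_antiderivative (k G : R -> R) (a b : R) (hab : a <= b)
  (pr : Riemann_integrable k a b) :
  (forall x, a <= x <= b -> continuity_pt k x) ->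
  (forall x, a <= x <= b -> derivable_pt_lim G x (k x)) ->
  RiemannInt pr = G b - G a.
Proof.
  intros Hk HG.
  rewrite (RiemannInt_P20 hab (FTC_P1 hab Hk) pr).
  assert (HG' : antiderivative k G a b).
  { split; [|exact hab]. intros x Hx.
    exists (exist _ (k x) (HG x Hx)). reflexivity. }
  destruct (antiderivative_Ucte k _ _ _ _ (RiemannInt_P29 hab Hk) HG') as [C HC].
  rewrite (HC b), (HC a) by lra. ring.
Qed.

Lemma Rint_antiderivative (f k G : R -> R) (a b : R) :
  (forall x, Rmin a b <= x <= Rmax a b -> f x = k x) ->
  (forall x, Rmin a b <= x <= Rmax a b -> continuity_pt k x) ->
  (forall x, Rmin a b <= x <= Rmax a b -> derivable_pt_lim G x (k x)) ->
  inhabited (Riemann_integrable f a b) /\ Rint f a b = G b - G a.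
Proof.
  intros Hfk Hk HG.
  assert (Hkf : forall x, Rmin a b <= x <= Rmax a b -> k x = f x)
    by (intros; symmetry; auto).
  assert (Hint : exists pr : Riemann_integrable f a b, RiemannInt pr = G b - G a).
  { destruct (Rle_dec a b) as [hab|hba].
    - rewrite Rmin_left, Rmax_right in Hfk, Hk, HG, Hkf by lra.
      pose (prk := continuity_implies_RiemannInt hab Hk).
      assert (prf : Riemann_integrable f a b).
      { eapply Riemann_integrable_ext; [|exact prk].
        rewrite Rmin_left, Rmax_right by lra. exact Hkf. }
      exists prf. rewrite (RiemannInt_P18 prf prk hab); [|intros; apply Hfk; lra].
      apply RiemannInt_antiderivative; auto.
    - assert (hba' : b <= a) by lra.
      rewrite Rmin_right, Rmax_left in Hfk, Hk, HG, Hkf by lra.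
      pose (prk := continuity_implies_RiemannInt hba' Hk).
      assert (prf : Riemann_integrable f b a).
      { eapply Riemann_integrable_ext; [|exact prk].
        rewrite Rmin_left, Rmax_right by lra. exact Hkf. }
      exists (RiemannInt_P1 prf).
      rewrite (RiemannInt_P8 (RiemannInt_P1 prf) prf).
      rewrite (RiemannInt_P18 prf prk hba'); [|intros; apply Hfk; lra].
      rewrite (RiemannInt_antiderivative k G b a hba' prk Hk HG). ring. }
  destruct Hint as [pr Hpr]. split; [exact (inhabits pr)|].
  unfold Rint.
  destruct (epsilon_spec (inhabits 0)
    (fun v => exists pr : Riemann_integrable f a b, RiemannInt pr = v)
    (ex_intro _ _ (ex_intro _ pr Hpr))) as [pr' Hpr'].
  rewrite <- Hpr', <- Hpr. apply RiemannInt_P5.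
Qed.

Lemma increasing_of_derivative_pos (f f' : R -> R) (lb ub : R) :
  (forall x, lb <= x <= ub -> derivable_pt_lim f x (f' x)) ->
  (forall x, lb <= x <= ub -> 0 < f' x) ->
  forall x y, lb <= x -> x < y -> y <= ub -> f x < f y.
Proof.
  intros Hf Hpos x y h1 h2 h3.
  destruct (MVT_cor2 f f' x y h2) as [c [Hc1 Hc2]]; [intros c hc; apply Hf; lra|].
  assert (0 < f' c) by (apply Hpos; lra).
  assert (0 < f' c * (y - x)) by (apply Rmult_lt_0_compat; lra). lra.
Qed.

Lemma derivable_inverse (f f' : R -> R) (lb ub : R) : lb < ub ->
  (forall x, lb <= x <= ub -> derivable_pt_lim f x (f' x)) ->
  (forall x, lb <= x <= ub -> 0 < f' x) ->
  exists g : R -> R,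
    (forall y, f lb <= y <= f ub -> lb <= g y <= ub /\ f (g y) = y) /\
    (forall x, lb <= x <= ub -> g (f x) = x) /\
    (forall y, f lb < y < f ub -> derivable_pt_lim g y (/ f' (g y))).
Proof.
  intros hlu Hf Hpos.
  pose proof (increasing_of_derivative_pos f f' lb ub Hf Hpos) as incr.
  assert (Hcont : forall x, lb <= x <= ub -> continuity_pt f x).
  { intros x hx. apply derivable_continuous_pt. exists (f' x). apply Hf, hx. }
  assert (Hmono : forall x, lb <= x <= ub -> f lb <= f x <= f ub).
  { intros x hx. split.
    - destruct (Req_dec x lb) as [->|ne]; [lra|]. left; apply incr; lra.
    - destruct (Req_dec x ub) as [->|ne]; [lra|]. left; apply incr; lra. }
  assert (Hinj : forall x y, lb <= x <= ub -> lb <= y <= ub -> f x = f y -> x = y).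
  { intros x y hx hy e. destruct (Rtotal_order x y) as [l|[l|l]]; auto.
    - specialize (incr x y ltac:(lra) l ltac:(lra)). lra.
    - specialize (incr y x ltac:(lra) l ltac:(lra)). lra. }
  pose (g := fun y => match Rle_dec (f lb) y with
     | left h1 => match Rle_dec y (f ub) with
         | left h2 => proj1_sig (f_interv_is_interv f lb ub y hlu (conj h1 h2) Hcont)
         | right _ => lb end
     | right _ => lb end).
  assert (Hg : forall y, f lb <= y <= f ub -> lb <= g y <= ub /\ f (g y) = y).
  { intros y [h1 h2]. unfold g.
    destruct (Rle_dec (f lb) y) as [h1'|]; [|lra].
    destruct (Rle_dec y (f ub)) as [h2'|]; [|lra].
    exact (proj2_sig (f_interv_is_interv f lb ub y hlu (conj h1' h2') Hcont)). }
  assert (Hgf : forall x, lb <= x <= ub -> g (f x) = x).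
  { intros x hx. destruct (Hg (f x) (Hmono x hx)). apply Hinj; auto. }
  exists g. split; [exact Hg|]. split; [exact Hgf|].
  intros y hy.
  assert (glb : g (f lb) = lb) by (apply Hgf; lra).
  assert (gub : g (f ub) = ub) by (apply Hgf; lra).
  assert (Prf : forall a, g (f lb) <= a <= g (f ub) -> derivable_pt f a).
  { intros a ha. rewrite glb, gub in ha. exists (f' a). apply Hf, ha. }
  assert (Prg : continuity_pt g y).
  { apply (continuity_pt_recip_interv f g lb ub hlu incr); [| |exact Hcont|exact hy].
    - intros x h1 h2. unfold comp, id. apply Hg; lra.
    - intros x h1 h2. apply Hg; lra. }
  destruct (Hg y ltac:(lra)) as [hgy hfgy].
  assert (Prg_incr : g (f lb) <= g y <= g (f ub)) by (rewrite glb, gub; exact hgy).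
  assert (hdf : derive_pt f (g y) (Prf (g y) Prg_incr) = f' (g y))
    by (apply derive_pt_eq_0, Hf, hgy).
  pose proof (derivable_pt_lim_recip_interv f g (f lb) (f ub) y Prf Prg
                (incr lb ub ltac:(lra) hlu ltac:(lra)) hy Prg_incr) as Hrecip.
  rewrite hdf in Hrecip.
  replace (/ f' (g y)) with (1 / f' (g y)) by (unfold Rdiv; ring).
  apply Hrecip.
  - intros x hx. apply Hg, hx.
  - specialize (Hpos (g y) hgy). lra.
Qed.
Lemma sin2_cos2_pow t : sin t ^ 2 + cos t ^ 2 = 1.
Proof. pose proof (sin2_cos2 t). unfold Rsqr in H. nra. Qed.

Lemma cos_neq_1 s : 0 < s < 2 * PI -> cos s <> 1.
Proof.
  intros hs e. replace s with (2 * (s / 2)) in e by field.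
  rewrite cos_2a_sin in e.
  assert (0 < sin (s / 2)) by (apply sin_gt_0; lra). nra.
Qed.

Lemma cos_plus_2PI t : cos (t + 2 * PI) = cos t.
Proof. replace (t + 2 * PI) with (t + 2 * INR 1 * PI) by (simpl; ring). apply cos_period. Qed.

Lemma sin_plus_2PI t : sin (t + 2 * PI) = sin t.
Proof. replace (t + 2 * PI) with (t + 2 * INR 1 * PI) by (simpl; ring). apply sin_period. Qed.

Lemma polar_angle u v : 0 < u ^ 2 + v ^ 2 ->
  exists phi, u = sqrt (u ^ 2 + v ^ 2) * cos phi /\ v = sqrt (u ^ 2 + v ^ 2) * sin phi.
Proof.
  intros h. set (r := sqrt (u ^ 2 + v ^ 2)).
  assert (hr : 0 < r) by (apply sqrt_lt_R0; lra).
  assert (hr2 : r * r = u ^ 2 + v ^ 2) by (apply sqrt_sqrt; lra).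
  set (c := u / r).
  assert (hc : -1 <= c <= 1).
  { unfold c. split; apply (Rmult_le_reg_r r); try lra; field_simplify; nra. }
  assert (hs : sqrt (1 - c²) = Rabs v / r).
  { apply sqrt_lem_1.
    - unfold Rsqr. nra.
    - apply Rmult_le_pos; [apply Rabs_pos|left; apply Rinv_0_lt_compat, hr].
    - unfold c, Rsqr.
      replace (Rabs v / r * (Rabs v / r)) with (Rabs v ^ 2 / (r * r)) by (field; lra).
      replace (1 - u / r * (u / r)) with ((r * r - u ^ 2) / (r * r)) by (field; lra).
      rewrite pow2_abs, hr2. f_equal; ring. }
  destruct (Rle_dec 0 v) as [hv|hv].
  - exists (acos c). rewrite cos_acos, sin_acos, hs, Rabs_pos_eq by lra.
    unfold c. split; field; lra.
  - exists (- acos c). rewrite cos_neg, sin_neg, cos_acos, sin_acos, hs, Rabs_left by lra.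
    unfold c. split; field; lra.
Qed.

(* [D > 0] and [C] are the coordinates of [(x, y)] in the frame rotated by [a]. *)
Lemma polar_angle_in_rotated_frame x y a :
  let D := x * cos a + y * sin a in let C := - x * sin a + y * cos a in
  0 < D ->
  x = sqrt (x ^ 2 + y ^ 2) * cos (a + atan (C / D)) /\
  y = sqrt (x ^ 2 + y ^ 2) * sin (a + atan (C / D)).
Proof.
  intros D C hD. set (z := C / D).
  pose proof (sin2_cos2_pow a) as t1.
  assert (hDC : D ^ 2 + C ^ 2 = x ^ 2 + y ^ 2) by (unfold D, C; nra).
  set (S := sqrt (x ^ 2 + y ^ 2)).
  assert (hS1 : 0 < S) by (apply sqrt_lt_R0; nra).
  assert (hS2 : S * S = x ^ 2 + y ^ 2) by (apply sqrt_sqrt; nra).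
  assert (hq : sqrt (1 + z²) = S / D).
  { apply sqrt_lem_1.
    - unfold Rsqr; nra.
    - apply Rmult_le_pos; [lra|left; apply Rinv_0_lt_compat; lra].
    - unfold z, Rsqr.
      replace (S / D * (S / D)) with ((S * S) / (D * D)) by (field; lra).
      rewrite hS2, <- hDC. field. lra. }
  rewrite cos_plus, sin_plus, cos_atan, sin_atan, hq.
  split.
  - replace (S * (cos a * (1 / (S / D)) - sin a * (z / (S / D))))
      with (D * cos a - C * sin a) by (unfold z; field; lra).
    unfold D, C.
    replace x with (x * (sin a ^ 2 + cos a ^ 2)) at 1 by (rewrite t1; ring). ring.
  - replace (S * (sin a * (1 / (S / D)) + cos a * (z / (S / D))))
      with (D * sin a + C * cos a) by (unfold z; field; lra).
    unfold D, C.
    replace y with (y * (sin a ^ 2 + cos a ^ 2)) at 1 by (rewrite t1; ring). ring.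
Qed.

(* Periodicity of [x], [y] makes the [atan] terms of the angle cancel over a
   period, leaving a total turn of [2 PI]. *)
Lemma angle_lift_of_rotating_halfplane (x y : R -> R) (phi : R) :
  continuity x -> continuity y ->
  (forall t, 0 < x t * cos (t - phi) + y t * sin (t - phi)) ->
  (forall t, x (t + 2 * PI) = x t /\ y (t + 2 * PI) = y t) ->
  exists theta : R -> R, continuity theta /\
    (forall t, x t = sqrt (x t ^ 2 + y t ^ 2) * cos (theta t) /\
               y t = sqrt (x t ^ 2 + y t ^ 2) * sin (theta t)) /\
    theta (2 * PI) <> theta 0.
Proof.
  intros cx cy hD hper.
  set (D := fun t => x t * cos (t - phi) + y t * sin (t - phi)).
  set (C := fun t => - x t * sin (t - phi) + y t * cos (t - phi)).
  exists (fun t => (t - phi) + atan (C t / D t)).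
  assert (ca : continuity (fun t => t - phi)).
  { apply continuity_minus; [apply derivable_continuous, derivable_id|].
    apply continuity_const. intros ? ?. reflexivity. }
  assert (cc : continuity (fun t => cos (t - phi))).
  { intros t. apply (continuity_pt_comp (fun t => t - phi) cos); [apply ca|apply continuity_cos]. }
  assert (cs : continuity (fun t => sin (t - phi))).
  { intros t. apply (continuity_pt_comp (fun t => t - phi) sin); [apply ca|apply continuity_sin]. }
  split; [|split].
  - intros t. apply continuity_pt_plus; [apply ca|].
    apply (continuity_pt_comp (fun t => C t / D t) atan).
    2: { apply derivable_continuous_pt, derivable_pt_atan. }
    apply continuity_pt_div.
    + unfold C. apply continuity_pt_plus; apply continuity_pt_mult; auto.
      apply continuity_pt_opp, cx.
    + unfold D. apply continuity_pt_plus; apply continuity_pt_mult; auto.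
    + specialize (hD t). fold (D t) in hD. lra.
  - intros t. apply polar_angle_in_rotated_frame, hD.
  - intros e. destruct (hper 0) as [h1 h2].
    rewrite Rplus_0_l in h1, h2.
    unfold C, D in e. rewrite h1, h2 in e.
    replace (2 * PI - phi) with ((0 - phi) + 2 * PI) in e by ring.
    rewrite cos_plus_2PI, sin_plus_2PI in e.
    pose proof PI_RGT_0. lra.
Qed.

Section DerivativeRules.
Implicit Types (f g : R -> R) (x a b : R).

Lemma dl_eq f x a b : derivable_pt_lim f x a -> a = b -> derivable_pt_lim f x b.
Proof. intros h <-; exact h. Qed.
Lemma dl_const c x : derivable_pt_lim (fun _ => c) x 0.
Proof. apply (derivable_pt_lim_const c). Qed.
Lemma dl_id x : derivable_pt_lim (fun y => y) x 1.
Proof. apply derivable_pt_lim_id. Qed.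
Lemma dl_plus f g x a b : derivable_pt_lim f x a -> derivable_pt_lim g x b ->
  derivable_pt_lim (fun y => f y + g y) x (a + b).
Proof. apply (derivable_pt_lim_plus f g). Qed.
Lemma dl_minus f g x a b : derivable_pt_lim f x a -> derivable_pt_lim g x b ->
  derivable_pt_lim (fun y => f y - g y) x (a - b).
Proof. apply (derivable_pt_lim_minus f g). Qed.
Lemma dl_opp f x a : derivable_pt_lim f x a -> derivable_pt_lim (fun y => - f y) x (- a).
Proof. apply (derivable_pt_lim_opp f). Qed.
Lemma dl_mult f g x a b : derivable_pt_lim f x a -> derivable_pt_lim g x b ->
  derivable_pt_lim (fun y => f y * g y) x (a * g x + f x * b).
Proof. apply (derivable_pt_lim_mult f g). Qed.
Lemma dl_div f g x a b : derivable_pt_lim f x a -> derivable_pt_lim g x b -> g x <> 0 ->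
  derivable_pt_lim (fun y => f y / g y) x ((a * g x - b * f x) / g x ^ 2).
Proof.
  intros hf hg hgx. eapply dl_eq; [exact (derivable_pt_lim_div f g x a b hf hg hgx)|].
  unfold Rsqr. field. exact hgx.
Qed.
Lemma dl_comp f g x a b : derivable_pt_lim g x a -> derivable_pt_lim f (g x) b ->
  derivable_pt_lim (fun y => f (g y)) x (b * a).
Proof. apply (derivable_pt_lim_comp g f). Qed.
Lemma dl_pow f x a n : derivable_pt_lim f x a ->
  derivable_pt_lim (fun y => f y ^ n) x (INR n * f x ^ pred n * a).
Proof. intros h. apply (dl_comp (fun y => y ^ n) f x a); [exact h|apply derivable_pt_lim_pow]. Qed.
Lemma dl_exp f x a : derivable_pt_lim f x a ->
  derivable_pt_lim (fun y => exp (f y)) x (exp (f x) * a).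
Proof. intros h. apply (dl_comp exp f x a); [exact h|apply derivable_pt_lim_exp]. Qed.
Lemma dl_ln f x a : derivable_pt_lim f x a -> 0 < f x ->
  derivable_pt_lim (fun y => ln (f y)) x (/ f x * a).
Proof. intros h h'. apply (dl_comp ln f x a); [exact h|apply derivable_pt_lim_ln, h']. Qed.
Lemma dl_sin f x a : derivable_pt_lim f x a ->
  derivable_pt_lim (fun y => sin (f y)) x (cos (f x) * a).
Proof. intros h. apply (dl_comp sin f x a); [exact h|apply derivable_pt_lim_sin]. Qed.
Lemma dl_cos f x a : derivable_pt_lim f x a ->
  derivable_pt_lim (fun y => cos (f y)) x (- sin (f x) * a).
Proof. intros h. apply (dl_comp cos f x a); [exact h|apply derivable_pt_lim_cos]. Qed.

End DerivativeRules.

Ltac derive_expr :=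
  eapply dl_eq;
  [ repeat first
      [ apply dl_const | apply dl_id
      | eapply dl_plus | eapply dl_minus | eapply dl_div | eapply dl_mult
      | eapply dl_opp | eapply dl_pow | eapply dl_exp | eapply dl_sin
      | eapply dl_cos | eapply dl_ln ]
  | cbv beta ].

Definition urabe_f (p1 q2 dp1 : R -> R) x := - (q2 x + dp1 x) / p1 x.

Definition urabe_g (p0 p1 q0 q1 q2 : R -> R) x :=
  - q2 x * p0 x ^ 2 / p1 x + q1 x * p0 x - p1 x * q0 x.

Definition urabe_dg (p0 p1 q0 q1 q2 dp0 dp1 dq0 dq1 dq2 : R -> R) x :=
  - (dq2 x * p0 x ^ 2 + q2 x * (2 * p0 x * dp0 x)) / p1 x
  + q2 x * p0 x ^ 2 * dp1 x / p1 x ^ 2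
  + (dq1 x * p0 x + q1 x * dp0 x) - (dp1 x * q0 x + p1 x * dq0 x).

Lemma derivable_urabe_g p0 p1 q0 q1 q2 dp0 dp1 dq0 dq1 dq2 x :
  derivable_pt_lim p0 x (dp0 x) -> derivable_pt_lim p1 x (dp1 x) ->
  derivable_pt_lim q0 x (dq0 x) -> derivable_pt_lim q1 x (dq1 x) ->
  derivable_pt_lim q2 x (dq2 x) -> p1 x <> 0 ->
  derivable_pt_lim (urabe_g p0 p1 q0 q1 q2) x
    (urabe_dg p0 p1 q0 q1 q2 dp0 dp1 dq0 dq1 dq2 x).
Proof.
  intros h0 h1 h2 h3 h4 hp. unfold urabe_g, urabe_dg.
  eapply dl_eq.
  { apply dl_minus; [apply dl_plus|apply dl_mult; eauto].
    - apply dl_div; [|exact h1|exact hp].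
      apply dl_mult; [apply dl_opp, h4|apply dl_pow, h0].
    - apply dl_mult; eauto. }
  simpl. field. exact hp.
Qed.

Lemma exp_between t : Rabs t <= 1/4 -> 3/4 <= exp t <= 4/3.
Proof.
  intros h. apply Rabs_le_between in h.
  pose proof (exp_ineq1_le t). pose proof (exp_ineq1_le (- t)) as hneg.
  rewrite exp_Ropp in hneg. pose proof (exp_pos t).
  assert (hinv : (1 - t) * exp t <= / exp t * exp t) by (apply Rmult_le_compat_r; lra).
  rewrite Rinv_l in hinv by lra. split; nra.
Qed.

Section Linearization.

Variables p0 p1 q0 q1 q2 dp0 dp1 dq0 dq1 dq2 F : R -> R.
Variable d : R.

Local Notation P := (fun x y => p0 x + p1 x * y).
Local Notation Q := (fun x y => q0 x + q1 x * y + q2 x * y ^ 2).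
Local Notation f := (urabe_f p1 q2 dp1).
Local Notation g := (urabe_g p0 p1 q0 q1 q2).

Hypothesis Hd : 0 < d <= 1/16.
Hypotheses (Hp0 : forall x, derivable_pt_lim p0 x (dp0 x))
           (Hp1 : forall x, derivable_pt_lim p1 x (dp1 x))
           (Hq0 : forall x, derivable_pt_lim q0 x (dq0 x))
           (Hq1 : forall x, derivable_pt_lim q1 x (dq1 x))
           (Hq2 : forall x, derivable_pt_lim q2 x (dq2 x)).
Hypothesis Hcompat : forall x, p1 x <> 0 ->
  - dp1 x * p0 x / p1 x + q1 x + dp0 x - 2 * q2 x * p0 x / p1 x = 0.
Hypotheses (p0_0 : p0 0 = 0) (q0_0 : q0 0 = 0) (F_0 : F 0 = 0).
Hypothesis HF : forall x, Rabs x <= d -> derivable_pt_lim F x (f x).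
Hypothesis Hf_cont : forall x, Rabs x <= d -> continuity_pt f x.
(* [(g e^F)' = e^F] *)
Hypothesis Hg_F : forall x, Rabs x <= d ->
  urabe_dg p0 p1 q0 q1 q2 dp0 dp1 dq0 dq1 dq2 x + g x * f x = 1.
Hypothesis Hp1_bound : forall x, Rabs x <= d -> -2 <= p1 x <= -1/2.
Hypothesis Hp0_bound : forall x, Rabs x <= d -> Rabs (p0 x) <= 2 * x ^ 2.
Hypothesis HF_bound : forall x, Rabs x <= d -> Rabs (F x) <= 1/4.
Hypothesis Hg_bound : forall x, Rabs x <= d ->
  2/3 * x ^ 2 <= x * g x /\ Rabs (g x) <= 3/2 * Rabs x.

Definition xi x := g x * exp (F x).

Lemma p1_neq0 x : Rabs x <= d -> p1 x <> 0.
Proof. intros hx. specialize (Hp1_bound x hx). lra. Qed.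

Lemma expF_between x : Rabs x <= d -> 3/4 <= exp (F x) <= 4/3.
Proof. intros hx. apply exp_between, HF_bound, hx. Qed.

Lemma derivable_expF x : Rabs x <= d ->
  derivable_pt_lim (fun x => exp (F x)) x (exp (F x) * f x).
Proof. intros hx. apply dl_exp, HF, hx. Qed.

Lemma derivable_xi x : Rabs x <= d -> derivable_pt_lim xi x (exp (F x)).
Proof.
  intros hx. unfold xi. eapply dl_eq.
  { apply dl_mult; [apply derivable_urabe_g; auto; apply p1_neq0, hx|apply derivable_expF, hx]. }
  transitivity ((urabe_dg p0 p1 q0 q1 q2 dp0 dp1 dq0 dq1 dq2 x + g x * f x) * exp (F x));
    [ring|rewrite (Hg_F x hx); ring].
Qed.

Lemma xi_0 : xi 0 = 0.
Proof. unfold xi, urabe_g. rewrite p0_0, q0_0. unfold Rdiv. ring. Qed.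

Lemma xi_bounds x : Rabs x <= d -> x ^ 2 / 2 <= x * xi x /\ Rabs (xi x) <= 2 * Rabs x.
Proof.
  intros hx. destruct (Hg_bound x hx) as [h1 h2]. pose proof (expF_between x hx).
  unfold xi. split.
  - replace (x * (g x * exp (F x))) with (x * g x * exp (F x)) by ring. nra.
  - rewrite Rabs_mult, (Rabs_pos_eq (exp (F x))) by lra.
    pose proof (Rabs_pos (g x)). pose proof (Rabs_pos x). nra.
Qed.

Lemma linearization_zero_Urabe : zero_Urabe p0 p1 q0 q1 q2.
Proof.
  exists dp0, dp1. split; [exact Hp0|]. split; [exact Hp1|]. split; [exact Hcompat|].
  intros f' g' F'.
  assert (HRF : forall s, Rabs s <= d ->
                  inhabited (Riemann_integrable f' 0 s) /\ F' s = F s).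
  { intros s hs. destruct (Rint_antiderivative f f F 0 s) as [h1 h2]; [reflexivity| | |].
    - intros t ht. apply Hf_cont. pose proof (Rabs_le_between_0 s t ht). lra.
    - intros t ht. apply HF. pose proof (Rabs_le_between_0 s t ht). lra.
    - split; [exact h1|]. change (Rint f 0 s = F s). rewrite h2, F_0. ring. }
  exists d. split; [lra|]. intros x hx.
  assert (Hsmall : forall t, Rmin 0 x <= t <= Rmax 0 x -> Rabs t <= d)
    by (intros t ht; pose proof (Rabs_le_between_0 x t ht); lra).
  destruct (Rint_antiderivative (fun s => g' s * exp (2 * F' s)) (fun s => xi s * exp (F s))
              (fun s => / 2 * xi s ^ 2) 0 x) as [Hg_int Hg_Rint].
  - intros t ht. rewrite (proj2 (HRF t (Hsmall t ht))).
    unfold xi. replace (2 * F t) with (F t + F t) by ring. rewrite exp_plus. symmetry. apply Rmult_assoc.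
  - intros t ht. apply continuity_pt_mult; apply derivable_continuous_pt.
    + exists (exp (F t)). apply derivable_xi, Hsmall, ht.
    + exists (exp (F t) * f t). apply derivable_expF, Hsmall, ht.
  - intros t ht. eapply dl_eq.
    { apply (derivable_pt_lim_scal (fun s => xi s ^ 2)), dl_pow, derivable_xi, Hsmall, ht. }
    simpl. field.
  - destruct (HRF x ltac:(lra)) as [Hf_int ->].
    split; [exact Hf_int|]. split; [exact Hg_int|]. split.
    + rewrite Hg_Rint, xi_0. change (g' x) with (g x). unfold xi. ring.
    + intros hx0. destruct (xi_bounds x ltac:(lra)) as [hb _].
      assert (0 < x ^ 2) by (simpl; rewrite Rmult_1_r; apply Rsqr_pos_lt, hx0).
      change (g' x * exp (F x)) with (xi x). lra.
Qed.

Lemma xi_endpoints : xi (- d) <= - d / 2 /\ d / 2 <= xi d.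
Proof.
  assert (hl : Rabs (- d) <= d) by (rewrite Rabs_Ropp, Rabs_pos_eq; lra).
  assert (hr : Rabs d <= d) by (rewrite Rabs_pos_eq; lra).
  destruct (xi_bounds _ hl) as [h1 _]. destruct (xi_bounds _ hr) as [h2 _].
  split; nra.
Qed.

Lemma linearization_origin x y : Rabs x <= d ->
  xi x = 0 -> exp (F x) * (p0 x + p1 x * y) = 0 -> x = 0 /\ y = 0.
Proof.
  intros hx hu hv. destruct (xi_bounds x hx) as [hb _]. rewrite hu in hb.
  assert (hx0 : x = 0) by nra. subst x. split; [reflexivity|].
  rewrite p0_0, Rplus_0_l in hv.
  assert (h0 : Rabs 0 <= d) by (rewrite Rabs_R0; lra).
  pose proof (exp_pos (F 0)). specialize (Hp1_bound 0 h0).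
  destruct (Rmult_integral _ _ hv) as [e|e]; [lra|].
  destruct (Rmult_integral _ _ e); lra.
Qed.

Lemma linearization_small a b : Rabs a <= d / 32 -> Rabs b <= d / 32 ->
  Rabs (xi a) + Rabs (exp (F a) * (p0 a + p1 a * b)) <= d / 4.
Proof.
  intros ha hb. assert (ha' : Rabs a <= d) by lra.
  destruct (xi_bounds a ha') as [_ hxi]. pose proof (expF_between a ha') as hE.
  specialize (Hp0_bound a ha'). specialize (Hp1_bound a ha').
  rewrite Rabs_mult, (Rabs_pos_eq (exp (F a))) by lra.
  assert (hsum : Rabs (p0 a + p1 a * b) <= 2 * a ^ 2 + 2 * Rabs b).
  { eapply Rle_trans; [apply Rabs_triang|]. rewrite Rabs_mult.
    assert (Rabs (p1 a) <= 2) by (apply Rabs_le; lra).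
    pose proof (Rabs_pos b). nra. }
  rewrite <- pow2_abs in hsum. pose proof (Rabs_pos a).
  assert (Rabs a ^ 2 <= d / 32 * (d / 32)) by (simpl; rewrite Rmult_1_r; apply Rmult_le_compat; lra).
  pose proof (Rabs_pos (p0 a + p1 a * b)).
  assert (exp (F a) * Rabs (p0 a + p1 a * b) <= 4/3 * Rabs (p0 a + p1 a * b))
    by (apply Rmult_le_compat_r; lra).
  nra.
Qed.

(* The right-hand side is the inner product of [(x, y)] and [(u, - v)]. *)
Lemma linearization_acute x y : Rabs x <= d -> 0 < x ^ 2 + y ^ 2 ->
  0 < x * xi x - y * (exp (F x) * (p0 x + p1 x * y)).
Proof.
  intros hx hxy.
  destruct (xi_bounds x hx) as [hxi _]. pose proof (expF_between x hx) as hE.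
  specialize (Hp0_bound x hx). specialize (Hp1_bound x hx).
  set (E := exp (F x)) in *. set (P0 := p0 x) in *. set (P1 := p1 x) in *.
  assert (hcross : Rabs (y * E * P0) <= Rabs y * (4/3) * (2 * x ^ 2)).
  { rewrite !Rabs_mult, (Rabs_pos_eq E) by lra.
    pose proof (Rabs_pos y). pose proof (Rabs_pos P0).
    apply Rmult_le_compat; nra. }
  apply Rabs_le_between in hcross.
  pose proof (Rabs_pos x). pose proof (Rabs_pos y).
  assert (hsmall : Rabs y * (4/3) * (2 * x ^ 2) <= (x ^ 2 + y ^ 2) / 12).
  { rewrite <- (pow2_abs x), <- (pow2_abs y).
    assert (0 <= (1/16 - Rabs x) * (Rabs x * Rabs y)) by (apply Rmult_le_pos; nra).
    pose proof (pow2_ge_0 (Rabs x - Rabs y)). nra. }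
  assert (0 <= (E - 3/4) * (- P1 - 1/2)) by (apply Rmult_le_pos; lra).
  assert (hy2 : 3/8 * y ^ 2 <= - (E * P1) * y ^ 2)
    by (apply Rmult_le_compat_r; [apply pow2_ge_0|nra]).
  replace (x * xi x - y * (E * (P0 + P1 * y)))
    with (x * xi x - y * E * P0 + - (E * P1) * y ^ 2) by ring.
  pose proof (pow2_ge_0 x). lra.
Qed.

Section Orbit.

Variable X : R -> R.
Hypothesis HX : forall u, xi (- d) <= u <= xi d -> - d <= X u <= d /\ xi (X u) = u.
Hypothesis HX' : forall u, xi (- d) < u < xi d -> derivable_pt_lim X u (/ exp (F (X u))).
Variables u0 v0 : R.
Hypothesis Huv0 : 0 < u0 ^ 2 + v0 ^ 2.
Hypothesis Huv0_small : Rabs u0 + Rabs v0 <= d / 4.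

Definition rot_u t := u0 * cos t + v0 * sin t.
Definition rot_v t := - u0 * sin t + v0 * cos t.
Definition orbit_x t := X (rot_u t).
Definition orbit_y t :=
  (rot_v t / exp (F (orbit_x t)) - p0 (orbit_x t)) / p1 (orbit_x t).

Lemma rot_norm t : rot_u t ^ 2 + rot_v t ^ 2 = u0 ^ 2 + v0 ^ 2.
Proof. unfold rot_u, rot_v. pose proof (sin2_cos2_pow t). nra. Qed.

Lemma rot_u_range t : xi (- d) < rot_u t < xi d.
Proof.
  assert (hu : Rabs (rot_u t) <= d / 4).
  { unfold rot_u. eapply Rle_trans; [apply Rabs_triang|]. rewrite !Rabs_mult.
    assert (Rabs (cos t) <= 1) by (apply Rabs_le, COS_bound).
    assert (Rabs (sin t) <= 1) by (apply Rabs_le, SIN_bound).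
    pose proof (Rabs_pos u0). pose proof (Rabs_pos v0).
    pose proof (Rabs_pos (cos t)). pose proof (Rabs_pos (sin t)). nra. }
  destruct xi_endpoints. pose proof (Rabs_le_between _ _ hu). lra.
Qed.

Lemma orbit_x_spec t : Rabs (orbit_x t) <= d /\ xi (orbit_x t) = rot_u t.
Proof.
  pose proof (rot_u_range t).
  destruct (HX (rot_u t) ltac:(lra)) as [hx hxi]. split; [apply Rabs_le, hx|exact hxi].
Qed.

Lemma rot_v_eq t :
  rot_v t = exp (F (orbit_x t)) * (p0 (orbit_x t) + p1 (orbit_x t) * orbit_y t).
Proof.
  pose proof (exp_pos (F (orbit_x t))). pose proof (p1_neq0 _ (proj1 (orbit_x_spec t))).
  unfold orbit_y. field. lra.
Qed.

Lemma derivable_orbit_x t :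
  derivable_pt_lim orbit_x t (/ exp (F (orbit_x t)) * rot_v t).
Proof.
  apply (dl_comp X rot_u).
  - unfold rot_u, rot_v. derive_expr. ring.
  - apply HX', rot_u_range.
Qed.

Lemma derivable_orbit_y t :
  derivable_pt_lim orbit_y t
    (q0 (orbit_x t) + q1 (orbit_x t) * orbit_y t + q2 (orbit_x t) * orbit_y t ^ 2).
Proof.
  destruct (orbit_x_spec t) as [hx hu].
  pose proof (derivable_orbit_x t) as Hx.
  assert (hv : derivable_pt_lim rot_v t (- rot_u t))
    by (unfold rot_u, rot_v; derive_expr; ring).
  pose proof (exp_pos (F (orbit_x t))) as hE. pose proof (p1_neq0 _ hx) as hP1.
  unfold orbit_y. eapply dl_eq.
  { apply dl_div; [apply dl_minus; [apply dl_div|]| |exact hP1].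
    - exact hv.
    - apply (dl_comp (fun x => exp (F x)) orbit_x); [exact Hx|apply derivable_expF, hx].
    - lra.
    - apply (dl_comp p0 orbit_x); [exact Hx|apply Hp0].
    - apply (dl_comp p1 orbit_x); [exact Hx|apply Hp1]. }
  rewrite <- hu. unfold xi, urabe_g, urabe_f.
  pose proof (Hcompat _ hP1) as hc.
  set (x := orbit_x t) in *.
  assert (hE0 : exp (F x) <> 0) by lra.
  (* The computed derivative differs from [Q] by [x' / p1] times the
     compatibility expression. *)
  transitivity (q0 x + q1 x * orbit_y t + q2 x * orbit_y t ^ 2
    - / exp (F x) * rot_v t * (- dp1 x * p0 x / p1 x + q1 x + dp0 x - 2 * q2 x * p0 x / p1 x)
      / p1 x).
  - unfold orbit_y. fold x. field. split; assumption.
  - rewrite hc. unfold orbit_y. fold x. field. split; assumption.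
Qed.

Lemma orbit_solution : solution P Q orbit_x orbit_y.
Proof.
  intros t. split; [|apply derivable_orbit_y].
  eapply dl_eq; [apply derivable_orbit_x|].
  rewrite rot_v_eq. field. apply Rgt_not_eq, exp_pos.
Qed.

Lemma orbit_periodic t :
  orbit_x (t + 2 * PI) = orbit_x t /\ orbit_y (t + 2 * PI) = orbit_y t.
Proof.
  unfold orbit_y, orbit_x, rot_u, rot_v. rewrite cos_plus_2PI, sin_plus_2PI. split; reflexivity.
Qed.

Lemma orbit_closed : closed_orbit_period orbit_x orbit_y (2 * PI).
Proof.
  split; [pose proof PI_RGT_0; lra|]. split; [exact orbit_periodic|].
  intros s hs e. injection e as ex ey.
  assert (hu : rot_u s = rot_u 0).
  { destruct (orbit_x_spec s) as [_ <-]. destruct (orbit_x_spec 0) as [_ <-]. f_equal; exact ex. }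
  assert (hv : rot_v s = rot_v 0) by (rewrite !rot_v_eq, ex, ey; reflexivity).
  unfold rot_u, rot_v in hu, hv. rewrite cos_0, sin_0 in hu, hv.
  apply (cos_neq_1 s hs), (Rmult_eq_reg_l (u0 ^ 2 + v0 ^ 2)); [|lra].
  transitivity (u0 * (u0 * cos s + v0 * sin s) + v0 * (- u0 * sin s + v0 * cos s)); [ring|].
  rewrite hu, hv. ring.
Qed.

Lemma orbit_surrounds : surrounds_origin orbit_x orbit_y (2 * PI).
Proof.
  assert (Hnz : forall t, 0 < orbit_x t ^ 2 + orbit_y t ^ 2).
  { intros t. pose proof (pow2_ge_0 (orbit_x t)). pose proof (pow2_ge_0 (orbit_y t)).
    destruct (Req_dec (orbit_x t ^ 2 + orbit_y t ^ 2) 0) as [e|]; [|lra].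
    assert (ex : orbit_x t = 0) by nra. assert (ey : orbit_y t = 0) by nra.
    destruct (orbit_x_spec t) as [_ hu].
    pose proof (rot_norm t) as hn. rewrite <- hu, rot_v_eq, ex, ey, xi_0, p0_0 in hn.
    rewrite Rmult_0_r, Rplus_0_r, Rmult_0_r in hn. simpl in hn. lra. }
  split; [intros t; specialize (Hnz t); lra|].
  destruct (polar_angle u0 v0 Huv0) as [phi [hphi1 hphi2]].
  set (rho := sqrt (u0 ^ 2 + v0 ^ 2)) in *.
  assert (hrho : 0 < rho) by (apply sqrt_lt_R0; lra).
  apply (angle_lift_of_rotating_halfplane orbit_x orbit_y phi).
  - intros t. apply derivable_continuous_pt. eexists. apply derivable_orbit_x.
  - intros t. apply derivable_continuous_pt. eexists. apply derivable_orbit_y.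
  - intros t. apply (Rmult_lt_reg_l rho); [exact hrho|]. rewrite Rmult_0_r.
    replace (rho * (orbit_x t * cos (t - phi) + orbit_y t * sin (t - phi)))
      with (orbit_x t * rot_u t - orbit_y t * rot_v t)
      by (unfold rot_u, rot_v; rewrite hphi1, hphi2, cos_minus, sin_minus; ring).
    destruct (orbit_x_spec t) as [hx <-]. rewrite rot_v_eq.
    apply linearization_acute; [exact hx|apply Hnz].
  - exact orbit_periodic.
Qed.

End Orbit.

Lemma linearization_isochronous_center : isochronous_center P Q.
Proof.
  destruct (derivable_inverse xi (fun x => exp (F x)) (- d) d) as [X [HX [HXxi HX']]].
  - lra.
  - intros x hx. apply derivable_xi, Rabs_le, hx.
  - intros x _. apply exp_pos.
  - exists (d / 32). split; [lra|]. exists (2 * PI). split; [pose proof PI_RGT_0; lra|].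
    intros a b hab.
    assert (ha : Rabs a <= d / 32) by (apply Rabs_le; split; nra).
    assert (hb : Rabs b <= d / 32) by (apply Rabs_le; split; nra).
    assert (ha' : Rabs a <= d) by lra.
    set (u0 := xi a). set (v0 := exp (F a) * (p0 a + p1 a * b)).
    assert (Huv0 : 0 < u0 ^ 2 + v0 ^ 2).
    { pose proof (pow2_ge_0 u0). pose proof (pow2_ge_0 v0).
      destruct (Req_dec (u0 ^ 2 + v0 ^ 2) 0) as [e|ne]; [|lra].
      assert (hu0 : u0 = 0) by nra. assert (hv0 : v0 = 0) by nra.
      destruct (linearization_origin a b ha' hu0 hv0) as [-> ->]. lra. }
    pose proof (linearization_small a b ha hb) as Hsmall.
    assert (HXa : X u0 = a) by (apply HXxi, Rabs_le_between, ha').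
    exists (orbit_x X u0 v0), (orbit_y X u0 v0). split; [|split; [|split; [|split]]].
    + apply orbit_solution; auto.
    + unfold orbit_x, rot_u. rewrite cos_0, sin_0, Rmult_1_r, Rmult_0_r, Rplus_0_r.
      exact HXa.
    + unfold orbit_y, orbit_x, rot_u, rot_v. rewrite cos_0, sin_0.
      replace (u0 * 1 + v0 * 0) with u0 by ring. replace (- u0 * 0 + v0 * 1) with v0 by ring.
      rewrite HXa. unfold v0. field.
      split; [apply Rgt_not_eq, exp_pos|apply p1_neq0, ha'].
    + apply orbit_closed; auto.
    + apply orbit_surrounds; auto.
Qed.

Lemma linearization_iso_center_zero_Urabe (P' Q' : R -> R -> R) :
  (forall x y, P' x y = p0 x + p1 x * y) ->
  (forall x y, Q' x y = q0 x + q1 x * y + q2 x * y ^ 2) ->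
  iso_center_zero_Urabe P' Q'.
Proof.
  intros HP HQ. split.
  - replace P' with P by (do 2 (apply functional_extensionality; intro); symmetry; apply HP).
    replace Q' with Q by (do 2 (apply functional_extensionality; intro); symmetry; apply HQ).
    exact linearization_isochronous_center.
  - exists p0, p1, q0, q1, q2. do 4 (split; [assumption|]). split.
    + apply p1_neq0. rewrite Rabs_R0. lra.
    + exact linearization_zero_Urabe.
Qed.

End Linearization.

Definition radius (b : R) := / (16 * (1 + b ^ 2)).

Lemma radius_bounds b : 0 < radius b <= 1/16.
Proof.
  unfold radius. assert (hp : 0 < 16 * (1 + b ^ 2)) by nra. split.
  - apply Rinv_0_lt_compat, hp.
  - apply (Rmult_le_reg_r (16 * (1 + b ^ 2))); [exact hp|]. rewrite Rinv_l by lra. nra.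
Qed.

Lemma mult_radius_between b x : Rabs x <= radius b -> - (1/32) <= b * x <= 1/32.
Proof.
  intros h. apply Rabs_le_between. rewrite Rabs_mult. unfold radius in h.
  assert (hp : 0 < 16 * (1 + b ^ 2)) by nra.
  assert (2 * Rabs b <= 1 + b ^ 2)
    by (rewrite <- pow2_abs; pose proof (pow2_ge_0 (Rabs b - 1)); nra).
  apply Rle_trans with (Rabs b * / (16 * (1 + b ^ 2))).
  - apply Rmult_le_compat_l; [apply Rabs_pos|exact h].
  - apply (Rmult_le_reg_r (16 * (1 + b ^ 2))); [exact hp|].
    rewrite Rmult_assoc, Rinv_l by lra. lra.
Qed.

Lemma pow_between k r n : - r <= k <= r -> - r ^ n <= k ^ n <= r ^ n.
Proof.
  intros h. apply Rabs_le_between. rewrite <- RPow_abs.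
  apply pow_incr. split; [apply Rabs_pos|apply Rabs_le, h].
Qed.

Lemma Rabs_ln_le w : 1/2 <= w -> Rabs (ln w) <= 2 * Rabs (w - 1).
Proof.
  intros hw. apply Rabs_le.
  pose proof (exp_ineq1_le (ln w)) as hl. rewrite exp_ln in hl by lra.
  pose proof (exp_ineq1_le (- ln w)) as hr. rewrite exp_Ropp, exp_ln in hr by lra.
  assert (hw' : (1 - ln w) * w <= / w * w) by (apply Rmult_le_compat_r; lra).
  rewrite Rinv_l in hw' by lra.
  unfold Rabs; destruct (Rcase_abs (w - 1)); split; nra.
Qed.

Lemma Rabs_scal_ln_le c w r : 1/2 <= w -> - r <= w - 1 <= r ->
  Rabs (c * ln w) <= 2 * Rabs c * r.
Proof.
  intros hw hr. rewrite Rabs_mult. pose proof (Rabs_ln_le w hw).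
  assert (Rabs (w - 1) <= r) by (apply Rabs_le, hr).
  pose proof (Rabs_pos c). pose proof (Rabs_pos (ln w)). nra.
Qed.

Lemma Rabs_sub_le a b : Rabs (a - b) <= Rabs a + Rabs b.
Proof. unfold Rminus. rewrite <- (Rabs_Ropp b). apply Rabs_triang. Qed.

Lemma Rabs_sq_mult_le x w : - 2 <= w <= 2 -> Rabs (x ^ 2 * w) <= 2 * x ^ 2.
Proof.
  intros hw. rewrite Rabs_mult, (Rabs_pos_eq (x ^ 2)) by apply pow2_ge_0.
  assert (Rabs w <= 2) by (apply Rabs_le, hw). pose proof (pow2_ge_0 x). nra.
Qed.

Lemma div_between N D : 0 < D -> 2/3 * D <= N <= 3/2 * D -> 2/3 <= N / D <= 3/2.
Proof.
  intros hD h. replace (N / D) with (N * / D) by reflexivity.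
  assert (0 < / D) by (apply Rinv_0_lt_compat, hD).
  split; apply (Rmult_le_reg_r D); try exact hD; rewrite Rmult_assoc, Rinv_l; lra.
Qed.

Lemma scaled_between x h : 2/3 <= h <= 3/2 ->
  2/3 * x ^ 2 <= x * (x * h) /\ Rabs (x * h) <= 3/2 * Rabs x.
Proof.
  intros hh. split.
  - pose proof (pow2_ge_0 x). nra.
  - rewrite Rabs_mult, (Rabs_pos_eq h) by lra. pose proof (Rabs_pos x). nra.
Qed.

Ltac derive_solve := derive_expr; cbv beta in *; simpl; try lra; try (intro; lra).

Lemma ratio1_between k : - (1/32) <= k <= 1/32 ->
  2/3 <= (1 - k + 10/27 * k ^ 2 - 5/81 * k ^ 3 + 1/243 * k ^ 4) / (1 - k / 3) <= 3/2.
Proof.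
  intros hk. apply div_between; [lra|].
  pose proof (pow_between k (1/32) 2 hk). pose proof (pow_between k (1/32) 3 hk).
  pose proof (pow_between k (1/32) 4 hk). simpl in *. lra.
Qed.

(* In each system [F] is the primitive of [urabe_f] vanishing at 0, and the
   ratio bounded below is [urabe_g x / x]. *)
Lemma system1 b : iso_center_zero_Urabe (P1 b) (Q1 b).
Proof.
  apply (linearization_iso_center_zero_Urabe
   (fun x => x ^ 2 - b/3 * x ^ 3) (fun x => -1 + b/3 * x)
   (fun x => x - b/3 * x ^ 2 + (b ^ 2/27 + 2) * x ^ 3 + b/3 * x ^ 4)
   (fun x => -2 * x - 4 * b/3 * x ^ 2) (fun _ => b)
   (fun x => 2 * x - b * x ^ 2) (fun _ => b/3)
   (fun x => 1 - 2 * b/3 * x + 3 * (b ^ 2/27 + 2) * x ^ 2 + 4 * b/3 * x ^ 3)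
   (fun x => -2 - 8 * b/3 * x) (fun _ => 0)
   (fun x => -4 * ln (1 - b * x / 3)) (radius b));
  try (intros x; derive_solve; field); cbv beta.
  - apply radius_bounds.
  - intros x hx. field. intro; apply hx; lra.
  - ring.
  - ring.
  - replace (1 - b * 0 / 3) with 1 by field. rewrite ln_1. ring.
  - intros x hx. pose proof (mult_radius_between b x hx).
    unfold urabe_f. derive_solve. field. lra.
  - intros x hx. pose proof (mult_radius_between b x hx).
    unfold urabe_f. apply derivable_continuous_pt. eexists. derive_solve. reflexivity.
  - intros x hx. pose proof (mult_radius_between b x hx).
    unfold urabe_dg, urabe_g, urabe_f. field. lra.
  - intros x hx. pose proof (mult_radius_between b x hx). nra.
  - intros x hx. pose proof (mult_radius_between b x hx).
    replace (x ^ 2 - b / 3 * x ^ 3) with (x ^ 2 * (1 - b * x / 3)) by field.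
    apply Rabs_sq_mult_le. lra.
  - intros x hx. pose proof (mult_radius_between b x hx).
    eapply Rle_trans; [apply (Rabs_scal_ln_le (-4) (1 - b * x / 3) (1/96)); lra|].
    rewrite Rabs_left by lra. lra.
  - intros x hx. pose proof (mult_radius_between b x hx).
    replace (urabe_g _ _ _ _ _ x) with
      (x * ((1 - b * x + 10/27 * (b * x) ^ 2 - 5/81 * (b * x) ^ 3 + 1/243 * (b * x) ^ 4)
            / (1 - b * x / 3)))
      by (unfold urabe_g; field; repeat split; intro; lra).
    apply scaled_between, ratio1_between. lra.
  - intros x y. unfold P1. ring.
  - intros x y. unfold Q1. ring.
Qed.

Lemma ratio2_between k : - (1/32) <= k <= 1/32 ->
  2/3 <= (1 - 7/8 * k + 5/16 * k ^ 2 - 15/256 * k ^ 3 + 3/512 * k ^ 4 - 1/4096 * k ^ 5)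
         / (1 - k / 4) <= 3/2.
Proof.
  intros hk. apply div_between; [lra|].
  pose proof (pow_between k (1/32) 2 hk). pose proof (pow_between k (1/32) 3 hk).
  pose proof (pow_between k (1/32) 4 hk). pose proof (pow_between k (1/32) 5 hk).
  simpl in *. lra.
Qed.

Lemma system2 b : iso_center_zero_Urabe (P2 b) (Q2 b).
Proof.
  apply (linearization_iso_center_zero_Urabe
   (fun x => x ^ 2 - b/4 * x ^ 3) (fun x => -1 + b/4 * x)
   (fun x => x - 3 * b/8 * x ^ 2 + (b ^ 2/16 + 2) * x ^ 3 + (- b ^ 3/256 + b/2) * x ^ 4)
   (fun x => -2 * x - 3 * b/2 * x ^ 2) (fun _ => b)
   (fun x => 2 * x - 3 * b/4 * x ^ 2) (fun _ => b/4)
   (fun x => 1 - 3 * b/4 * x + 3 * (b ^ 2/16 + 2) * x ^ 2 + 4 * (- b ^ 3/256 + b/2) * x ^ 3)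
   (fun x => -2 - 3 * b * x) (fun _ => 0)
   (fun x => -5 * ln (1 - b * x / 4)) (radius b));
  try (intros x; derive_solve; field); cbv beta.
  - apply radius_bounds.
  - intros x hx. field. intro; apply hx; lra.
  - ring.
  - ring.
  - replace (1 - b * 0 / 4) with 1 by field. rewrite ln_1. ring.
  - intros x hx. pose proof (mult_radius_between b x hx).
    unfold urabe_f. derive_solve. field. lra.
  - intros x hx. pose proof (mult_radius_between b x hx).
    unfold urabe_f. apply derivable_continuous_pt. eexists. derive_solve. reflexivity.
  - intros x hx. pose proof (mult_radius_between b x hx).
    unfold urabe_dg, urabe_g, urabe_f. field. lra.
  - intros x hx. pose proof (mult_radius_between b x hx). nra.
  - intros x hx. pose proof (mult_radius_between b x hx).
    replace (x ^ 2 - b / 4 * x ^ 3) with (x ^ 2 * (1 - b * x / 4)) by field.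
    apply Rabs_sq_mult_le. lra.
  - intros x hx. pose proof (mult_radius_between b x hx).
    eapply Rle_trans; [apply (Rabs_scal_ln_le (-5) (1 - b * x / 4) (1/128)); lra|].
    rewrite Rabs_left by lra. lra.
  - intros x hx. pose proof (mult_radius_between b x hx).
    replace (urabe_g _ _ _ _ _ x) with
      (x * ((1 - 7/8 * (b * x) + 5/16 * (b * x) ^ 2 - 15/256 * (b * x) ^ 3
             + 3/512 * (b * x) ^ 4 - 1/4096 * (b * x) ^ 5) / (1 - b * x / 4)))
      by (unfold urabe_g; field; repeat split; intro; lra).
    apply scaled_between, ratio2_between. lra.
  - intros x y. unfold P2. ring.
  - intros x y. unfold Q2. ring.
Qed.

Lemma ratio3_between x : - (1/16) <= x <= 1/16 ->
  2/3 <= (1 + 75/4 * x ^ 2 + 8505/64 * x ^ 4 + 54675/128 * x ^ 6 + 273375/512 * x ^ 8)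
         / (1 + 45/8 * x ^ 2) <= 3/2.
Proof.
  intros hx. pose proof (pow_between x (1/16) 2 hx). pose proof (pow_between x (1/16) 4 hx).
  pose proof (pow_between x (1/16) 6 hx). pose proof (pow_between x (1/16) 8 hx).
  simpl in *. apply div_between; lra.
Qed.

Lemma system3 : iso_center_zero_Urabe P3 Q3.
Proof.
  apply (linearization_iso_center_zero_Urabe
   (fun x => x ^ 2 + 45/8 * x ^ 4) (fun x => -1 - 45/8 * x ^ 2)
   (fun x => x + 19/2 * x ^ 3) (fun x => -2 * x + 45 * x ^ 3) (fun x => -225/8 * x)
   (fun x => 2 * x + 45/2 * x ^ 3) (fun x => -45/4 * x)
   (fun x => 1 + 57/2 * x ^ 2) (fun x => -2 + 135 * x ^ 2) (fun _ => -225/8)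
   (fun x => -7/2 * ln (1 + 45/8 * x ^ 2)) (1/16));
  try (intros x; derive_solve; field); cbv beta.
  - lra.
  - intros x hx. field. intro; apply hx; lra.
  - ring.
  - ring.
  - replace (1 + 45/8 * 0 ^ 2) with 1 by field. rewrite ln_1. ring.
  - intros x hx. pose proof (pow2_ge_0 x).
    unfold urabe_f. derive_solve; try nra. field. nra.
  - intros x hx. pose proof (pow2_ge_0 x).
    unfold urabe_f. apply derivable_continuous_pt. eexists. derive_solve; try (intro; nra).
    reflexivity.
  - intros x hx. pose proof (pow2_ge_0 x).
    unfold urabe_dg, urabe_g, urabe_f. field. nra.
  - intros x hx. pose proof (pow_between x (1/16) 2 (Rabs_le_between _ _ hx)). simpl in *. lra.
  - intros x hx. pose proof (pow_between x (1/16) 2 (Rabs_le_between _ _ hx)).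
    replace (x ^ 2 + 45/8 * x ^ 4) with (x ^ 2 * (1 + 45/8 * x ^ 2)) by field.
    apply Rabs_sq_mult_le. simpl in *; lra.
  - intros x hx. pose proof (pow_between x (1/16) 2 (Rabs_le_between _ _ hx)). simpl in *.
    eapply Rle_trans; [apply (Rabs_scal_ln_le (-7/2) (1 + 45/8 * x ^ 2) (1/40)); simpl; lra|].
    rewrite Rabs_left by lra. lra.
  - intros x hx. pose proof (pow2_ge_0 x).
    replace (urabe_g _ _ _ _ _ x) with
      (x * ((1 + 75/4 * x ^ 2 + 8505/64 * x ^ 4 + 54675/128 * x ^ 6 + 273375/512 * x ^ 8)
            / (1 + 45/8 * x ^ 2)))
      by (unfold urabe_g; field; repeat split; intro; nra).
    apply scaled_between, ratio3_between, Rabs_le_between, hx.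
  - intros x y. unfold P3. field.
  - intros x y. unfold Q3. field.
Qed.

Lemma system4 c : iso_center_zero_Urabe (P4 c) (Q4 c).
Proof.
  assert (hr2 : sqrt 2 * sqrt 2 = 2) by (apply sqrt_sqrt; lra).
  assert (hr : 1 < sqrt 2 < 3/2) by (pose proof (sqrt_pos 2); split; nra).
  assert (Hcx : forall x, Rabs x <= radius c -> - (1/32) <= c / sqrt 2 * x <= 1/32).
  { intros x hx. pose proof (mult_radius_between c x hx).
    replace (c / sqrt 2 * x) with (c * x / sqrt 2) by (field; lra).
    split; apply (Rmult_le_reg_r (sqrt 2)); try lra;
      replace (c * x / sqrt 2 * sqrt 2) with (c * x) by (field; lra); nra. }
  apply (linearization_iso_center_zero_Urabe
   (fun x => x ^ 2 - c ^ 2/2 * x ^ 4) (fun x => -1 + c ^ 2/2 * x ^ 2)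
   (fun x => x - c/2 * x ^ 2 + 2 * x ^ 3 + c * x ^ 4)
   (fun x => -2 * x - 2 * c * x ^ 2 - c ^ 2 * x ^ 3) (fun x => c + c ^ 2 * x)
   (fun x => 2 * x - 2 * c ^ 2 * x ^ 3) (fun x => c ^ 2 * x)
   (fun x => 1 - c * x + 6 * x ^ 2 + 4 * c * x ^ 3) (fun x => -2 - 4 * c * x - 3 * c ^ 2 * x ^ 2)
   (fun _ => c ^ 2)
   (fun x => sqrt 2 / 2 * (ln (1 + c / sqrt 2 * x) - ln (1 - c / sqrt 2 * x))
             - 2 * ln ((1 + c / sqrt 2 * x) * (1 - c / sqrt 2 * x))) (radius c));
  try (intros x; derive_solve; field); cbv beta.
  - apply radius_bounds.
  - intros x hx. field. intro; apply hx; lra.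
  - ring.
  - ring.
  - replace (c / sqrt 2 * 0) with 0 by ring. rewrite Rplus_0_r, Rminus_0_r, Rmult_1_l, ln_1. ring.
  - intros x hx. specialize (Hcx x hx).
    set (r := sqrt 2) in *. set (a := c / r) in *.
    unfold urabe_f. derive_solve; try nra.
    assert (hc : c = a * r) by (unfold a; field; lra).
    rewrite hc. replace (a * r * (a * r * 1)) with (2 * a ^ 2) by (rewrite <- hr2; ring).
    clearbody a r. field. repeat split; intro; nra.
  - intros x hx. pose proof (mult_radius_between c x hx).
    unfold urabe_f. apply derivable_continuous_pt. eexists. derive_solve; try (intro; nra).
    reflexivity.
  - intros x hx. pose proof (mult_radius_between c x hx).
    unfold urabe_dg, urabe_g, urabe_f. field. nra.
  - intros x hx. pose proof (mult_radius_between c x hx). nra.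
  - intros x hx. pose proof (mult_radius_between c x hx).
    replace (x ^ 2 - c ^ 2 / 2 * x ^ 4) with (x ^ 2 * (1 - (c * x) ^ 2 / 2)) by field.
    apply Rabs_sq_mult_le. nra.
  - intros x hx. specialize (Hcx x hx). set (z := c / sqrt 2 * x) in *.
    pose proof (Rabs_scal_ln_le 1 (1 + z) (1/32) ltac:(lra) ltac:(lra)) as L1.
    pose proof (Rabs_scal_ln_le 1 (1 - z) (1/32) ltac:(lra) ltac:(lra)) as L2.
    pose proof (Rabs_scal_ln_le 2 ((1 + z) * (1 - z)) (1/1000) ltac:(nra) ltac:(nra)) as L3.
    rewrite !Rmult_1_l, Rabs_R1 in L1, L2. rewrite (Rabs_pos_eq 2) in L3 by lra.
    pose proof (Rabs_sub_le (ln (1 + z)) (ln (1 - z))).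
    eapply Rle_trans; [apply Rabs_sub_le|].
    rewrite Rabs_mult, (Rabs_pos_eq (sqrt 2 / 2)) by lra.
    pose proof (Rabs_pos (ln (1 + z) - ln (1 - z))). nra.
  - intros x hx. pose proof (mult_radius_between c x hx).
    replace (urabe_g _ _ _ _ _ x) with (x * ((1 - (c * x) ^ 2 / 2) * (1 - c * x / 2)))
      by (unfold urabe_g; field; intro; nra).
    apply scaled_between.
    pose proof (pow_between (c * x) (1/32) 2 H). pose proof (pow_between (c * x) (1/32) 3 H).
    simpl in *. split; nra.
  - intros x y. unfold P4. field.
  - intros x y. unfold Q4. field.
Qed.

Theorem theorem4p2 (b c : R) :
  iso_center_zero_Urabe (P1 b) (Q1 b) /\
  iso_center_zero_Urabe (P2 b) (Q2 b) /\
  iso_center_zero_Urabe P3 Q3 /\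
  iso_center_zero_Urabe (P4 c) (Q4 c).
Proof.
  split; [apply system1|]. split; [apply system2|]. split; [apply system3|]. apply system4.
Qed.
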